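(* Let $\Delta x>0$, $\Delta t>0$ and $\lambda\in\mathbb{R}$, and let $(u_{i,j})_{(i,j)\in\mathbb{Z}^2}$ be an arbitrary real-valued grid function. Define $$\varphi_{-1,0}=\tfrac{1}{3}\,(\mu_n u_{-1,0}^2)\,(\mu_n u_{-1,0})+\mu_nD_m^2 u_{-2,0}+\lambda\,\Delta x^2\,D_mD_n\mu_m u_{-2,0},$$ and for $(i,j)\in\mathbb{Z}^2$ let $\varphi_{i,j}=S_m^{\,i+1}S_n^{\,j}\varphi_{-1,0}$ (so that, e.g., $\varphi_{0,0}=S_m\varphi_{-1,0}$). Let the scheme $\mathrm{EC}(\lambda)$ be $$\widetilde{\mathcal{A}}\equiv D_m(\widetilde{F_1})+D_n(\widetilde{G_1})=0,\qquad \widetilde{F_1}=\mu_m\varphi_{-1,0},\qquad \widetilde{G_1}=u_{0,0},$$ and define $$\widetilde{\mathcal{Q}}_3=\varphi_{0,0},\qquad \widetilde{G_3}=\tfrac{1}{12}u_{0,0}^4+\tfrac{1}{2}\,u_{0,0}\,(D_m^2u_{-1,0}),$$ $$\widetilde{F_3}=\tfrac{1}{2}\Big(\varphi_{-1,0}\varphi_{0,0}+(D_m\mu_nu_{-1,0})(D_n\mu_mu_{-1,0})-(\mu_m\mu_nu_{-1,0})(D_mD_nu_{-1,0})+\lambda\,\Delta x^2\,(D_nu_{0,0})(D_nu_{-1,0})\Big).$$ Then the identity $$\widetilde{\mathcal{Q}}_3\,\widetilde{\mathcal{A}}=D_m(\widetilde{F_3})+D_n(\widetilde{G_3})$$ holds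 for every grid function $u$. Consequently, every solution of the scheme $\mathrm{EC}(\lambda)$ satisfies both the discrete mass conservation law $D_m(\widetilde{F_1})+D_n(\widetilde{G_1})=0$ and the discrete energy conservation law $D_m(\widetilde{F_3})+D_n(\widetilde{G_3})=0$ (at every lattice point).
   Context: The scheme $\mathrm{EC}(\lambda)$ is a finite difference discretization, on a uniform grid with spacings $\Delta x,\Delta t$, of the modified Korteweg–de Vries equation $u_t+u^2u_x+u_{xxx}=0$, whose mass and energy conservation laws are $D_t(u)+D_x(\tfrac13u^3+u_{xx})=0$ and $D_t(\tfrac{1}{12}u^4+\tfrac12uu_{xx})+D_x\big(\tfrac12(\tfrac13u^3+u_{xx})^2+u_xu_t-uu_{xt}\big)=0$. Here $u_{i,j}$ approximates $u(x_0+i\Delta x,t_0+j\Delta t)$; all expressions are written relative to a generic lattice point $(0,0)$, and the forward shift operators act on any expression by shifting indices: $S_m u_{i,j}=u_{i+1,j}$, $S_n u_{i,j}=u_{i,j+1}$ (applied to all grid values appearing in the expression). With $I$ the identity, the forward differences and forward averages are $D_m=\tfrac{1}{\Delta x}(S_m-I)$, $D_n=\tfrac{1}{\Delta t}(S_n-I)$, $\mu_m=\tfrac12(S_m+I)$, $\mu_n=\tfrac12(S_n+I)$; e.g. $\mu_n u_{-1,0}^2=\tfrac12(u_{-1,0}^2+u_{-1,1}^2)$ and $D_m^2u_{-2,0}=(u_{0,0}-2u_{-1,0}+u_{-2,0})/\Delta x^2$. Products of operators denote composition, and operators act on the immediately following factor only. *)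

From Stdlib Require Import Reals ZArith.
Open Scope R_scope.

(* A "grid expression" is represented by its values at all lattice points:
   e i j = value of the expression when written relative to the lattice
   point (i,j) instead of (0,0). *)
Definition gexpr := Z -> Z -> R.

(* u_{a,b} as an expression relative to the generic point (0,0). *)
Definition gval (u : Z -> Z -> R) (a b : Z) : gexpr :=
  fun i j => u (a + i)%Z (b + j)%Z.

Definition gadd (e f : gexpr) : gexpr := fun i j => e i j + f i j.
Definition gsub (e f : gexpr) : gexpr := fun i j => e i j - f i j.
Definition gmul (e f : gexpr) : gexpr := fun i j => e i j * f i j.
Definition gscale (c : R) (e : gexpr) : gexpr := fun i j => c * e i j.
Definition gpow (e : gexpr) (n : nat) : gexpr := fun i j => (e i j) ^ n.

Definition Sm (e : gexpr) : gexpr := fun i j => e (i + 1)%Z j.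
Definition Sn (e : gexpr) : gexpr := fun i j => e i (j + 1)%Z.
Definition Dm (dx : R) (e : gexpr) : gexpr := fun i j => (Sm e i j - e i j) / dx.
Definition Dn (dt : R) (e : gexpr) : gexpr := fun i j => (Sn e i j - e i j) / dt.
Definition mum (e : gexpr) : gexpr := fun i j => (Sm e i j + e i j) / 2.
Definition mun (e : gexpr) : gexpr := fun i j => (Sn e i j + e i j) / 2.

Definition phim1 (dx dt lam : R) (u : Z -> Z -> R) : gexpr :=
  gadd (gadd
    (gscale (1/3) (gmul (mun (gpow (gval u (-1) 0) 2)) (mun (gval u (-1) 0))))
    (mun (Dm dx (Dm dx (gval u (-2) 0)))))
    (gscale (lam * dx ^ 2) (Dm dx (Dn dt (mum (gval u (-2) 0))))).

(* phi_{i,j} = S_m^{i+1} S_n^j phi_{-1,0}, as an expression relative to (0,0) *)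
Definition phi (dx dt lam : R) (u : Z -> Z -> R) (a b : Z) : gexpr :=
  fun i j => phim1 dx dt lam u (a + 1 + i)%Z (b + j)%Z.

Definition F1 dx dt lam u : gexpr := mum (phim1 dx dt lam u).
Definition G1 (u : Z -> Z -> R) : gexpr := gval u 0 0.

Definition A_EC dx dt lam u : gexpr :=
  gadd (Dm dx (F1 dx dt lam u)) (Dn dt (G1 u)).

Definition Q3 dx dt lam u : gexpr := phi dx dt lam u 0 0.

Definition G3 dx (u : Z -> Z -> R) : gexpr :=
  gadd (gscale (1/12) (gpow (gval u 0 0) 4))
       (gscale (1/2) (gmul (gval u 0 0) (Dm dx (Dm dx (gval u (-1) 0))))).

Definition F3 dx dt lam u : gexpr :=
  gscale (1/2)
    (gadd (gsub (gadd
      (gmul (phi dx dt lam u (-1) 0) (phi dx dt lam u 0 0))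
      (gmul (Dm dx (mun (gval u (-1) 0))) (Dn dt (mum (gval u (-1) 0)))))
      (gmul (mum (mun (gval u (-1) 0))) (Dm dx (Dn dt (gval u (-1) 0)))))
      (gscale (lam * dx ^ 2) (gmul (Dn dt (gval u 0 0)) (Dn dt (gval u (-1) 0))))).

From Stdlib Require Import Reals ZArith Lra FunctionalExtensionality.
Open Scope R_scope.

(* Since [Q3 = S_m phi_{-1,0}], the product [Q3 * A] splits into four terms,
   each an exact discrete divergence: [S_m phi * D_m mu_m phi] by a discrete
   product rule, the cubic term times [D_n u] by the discrete chain rule for
   [u^4/12], the dispersive term [mu_n D_m^2 u * D_n u] by summation by parts
   (the discrete form of [u_xx u_t = (u_x u_t - u u_xt)_x + (u u_xx / 2)_t]),
   and the lambda-term times [D_n u] telescopes in [m]. *)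

Section DiscreteDivergences.

Variables dx dt : R.
Hypothesis dx_neq0 : dx <> 0.
Hypothesis dt_neq0 : dt <> 0.

Lemma product_rule_Dm_mum (p : gexpr) (i j : Z) :
  Sm p i j * Dm dx (mum p) i j = Dm dx (gscale (1/2) (gmul p (Sm p))) i j.
Proof. cbv beta delta [Sm Dm mum gscale gmul]. field; assumption. Qed.

Lemma chain_rule_Dn_quartic (w : gexpr) (i j : Z) :
  gscale (1/3) (gmul (mun (gpow w 2)) (mun w)) i j * Dn dt w i j
  = Dn dt (gscale (1/12) (gpow w 4)) i j.
Proof. cbv beta delta [Sn Dn mun gscale gmul gpow]. field; assumption. Qed.

Lemma summation_by_parts_dispersion (w : gexpr) (i j : Z) :
  mun (Dm dx (Dm dx w)) i j * Dn dt (Sm w) i j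
  = Dm dx (gscale (1/2)
      (gsub (gmul (Dm dx (mun w)) (Dn dt (mum w)))
            (gmul (mum (mun w)) (Dm dx (Dn dt w))))) i j
    + Dn dt (gscale (1/2) (gmul (Sm w) (Dm dx (Dm dx w)))) i j.
Proof.
  cbv beta delta [Sm Sn Dm Dn mum mun gscale gmul gsub]. field; split; assumption.
Qed.

Lemma telescoping_Dm_Dn_mum (w : gexpr) (i j : Z) :
  Dm dx (Dn dt (mum w)) i j * Dn dt (Sm w) i j
  = Dm dx (gscale (1/2) (gmul (Dn dt (Sm w)) (Dn dt w))) i j.
Proof.
  cbv beta delta [Sm Sn Dm Dn mum gscale gmul]. field; split; assumption.
Qed.

End DiscreteDivergences.

(* The scheme written for an arbitrary grid function [v] in the role of
   [u_{-2,0}], so that [u_{-1,0} = S_m v] and [u_{0,0} = S_m^2 v]. *)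
Section EnergyIdentity.

Variables dx dt lam : R.
Hypothesis dx_neq0 : dx <> 0.
Hypothesis dt_neq0 : dt <> 0.

Definition ec_phi (v : gexpr) : gexpr :=
  gadd (gadd
    (gscale (1/3) (gmul (mun (gpow (Sm v) 2)) (mun (Sm v))))
    (mun (Dm dx (Dm dx v))))
    (gscale (lam * dx ^ 2) (Dm dx (Dn dt (mum v)))).

Definition energy_flux (v : gexpr) : gexpr :=
  gscale (1/2)
    (gadd (gsub (gadd
      (gmul (ec_phi v) (Sm (ec_phi v)))
      (gmul (Dm dx (mun (Sm v))) (Dn dt (mum (Sm v)))))
      (gmul (mum (mun (Sm v))) (Dm dx (Dn dt (Sm v)))))
      (gscale (lam * dx ^ 2) (gmul (Dn dt (Sm (Sm v))) (Dn dt (Sm v))))).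

Definition energy_density (v : gexpr) : gexpr :=
  gadd (gscale (1/12) (gpow (Sm (Sm v)) 4))
       (gscale (1/2) (gmul (Sm (Sm v)) (Dm dx (Dm dx (Sm v))))).

Lemma energy_identity (v : gexpr) (i j : Z) :
  Sm (ec_phi v) i j * (Dm dx (mum (ec_phi v)) i j + Dn dt (Sm (Sm v)) i j)
  = Dm dx (energy_flux v) i j + Dn dt (energy_density v) i j.
Proof.
  set (w := Sm v).
  transitivity
    (Sm (ec_phi v) i j * Dm dx (mum (ec_phi v)) i j
     + gscale (1/3) (gmul (mun (gpow (Sm w) 2)) (mun (Sm w))) i j * Dn dt (Sm w) i j
     + mun (Dm dx (Dm dx w)) i j * Dn dt (Sm w) i j
     + lam * dx ^ 2 * (Dm dx (Dn dt (mum w)) i j * Dn dt (Sm w) i j)).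
  { cbv beta delta [w ec_phi Sm Sn Dm Dn mum mun gadd gscale gmul gpow]. ring. }
  rewrite product_rule_Dm_mum, chain_rule_Dn_quartic,
    summation_by_parts_dispersion, telescoping_Dm_Dn_mum by assumption.
  cbv beta delta [w energy_flux energy_density ec_phi Sm Sn Dm Dn mum mun gadd gsub gscale gmul gpow].
  field; split; assumption.
Qed.

End EnergyIdentity.

Section Instantiation.

Variables (dx dt lam : R) (u : Z -> Z -> R).

Lemma Sm_gval (a b : Z) : Sm (gval u a b) = gval u (a + 1) b.
Proof.
  apply functional_extensionality; intro i.
  apply functional_extensionality; intro j.
  unfold Sm, gval. f_equal. ring.
Qed.

Lemma gval_m1_0 : gval u (-1) 0 = Sm (gval u (-2) 0).
Proof. rewrite Sm_gval. reflexivity. Qed.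

Lemma gval_0_0 : gval u 0 0 = Sm (Sm (gval u (-2) 0)).
Proof. rewrite !Sm_gval. reflexivity. Qed.

Lemma phim1_ec_phi : phim1 dx dt lam u = ec_phi dx dt lam (gval u (-2) 0).
Proof. unfold phim1, ec_phi. rewrite gval_m1_0. reflexivity. Qed.

Lemma phi_m1_0 : phi dx dt lam u (-1) 0 = phim1 dx dt lam u.
Proof.
  apply functional_extensionality; intro i.
  apply functional_extensionality; intro j.
  unfold phi. f_equal; ring.
Qed.

Lemma phi_0_0 : phi dx dt lam u 0 0 = Sm (phim1 dx dt lam u).
Proof.
  apply functional_extensionality; intro i.
  apply functional_extensionality; intro j.
  unfold phi, Sm. f_equal; ring.
Qed.

Lemma F3_energy_flux : F3 dx dt lam u = energy_flux dx dt lam (gval u (-2) 0).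
Proof.
  unfold F3, energy_flux.
  rewrite phi_m1_0, phi_0_0, phim1_ec_phi, gval_0_0, gval_m1_0.
  reflexivity.
Qed.

Lemma G3_energy_density : G3 dx u = energy_density dx (gval u (-2) 0).
Proof.
  unfold G3, energy_density. rewrite gval_0_0, gval_m1_0. reflexivity.
Qed.

End Instantiation.

Theorem mainTheorem1 (dx dt lam : R) (Hdx : 0 < dx) (Hdt : 0 < dt) :
  forall u : Z -> Z -> R,
    (forall i j : Z,
        Q3 dx dt lam u i j * A_EC dx dt lam u i j
        = gadd (Dm dx (F3 dx dt lam u)) (Dn dt (G3 dx u)) i j)
    /\
    ((forall i j : Z, A_EC dx dt lam u i j = 0) ->
     forall i j : Z,
       gadd (Dm dx (F1 dx dt lam u)) (Dn dt (G1 u)) i j = 0 /\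
       gadd (Dm dx (F3 dx dt lam u)) (Dn dt (G3 dx u)) i j = 0).
Proof.
  intro u.
  assert (identity : forall i j : Z,
    Q3 dx dt lam u i j * A_EC dx dt lam u i j
    = gadd (Dm dx (F3 dx dt lam u)) (Dn dt (G3 dx u)) i j).
  { intros i j.
    unfold Q3, A_EC, F1, G1, gadd.
    rewrite phi_0_0, F3_energy_flux, G3_energy_density, phim1_ec_phi, gval_0_0.
    apply energy_identity; lra. }
  split; [exact identity |].
  intros scheme i j; split.
  - exact (scheme i j).
  - rewrite <- identity, scheme. ring.
Qed.
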